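(* Let $\alpha,\beta>0$, let $g(n)=c_0$ be constant, and let $x$ be a sequence (with given $x(1)$) satisfying $x(n)=\alpha\,x(\lfloor n/2\rfloor)+\beta\,x(\lceil n/2\rceil)+g(n)$ for $n\ge2$. Let $d_0\coloneqq(1-\beta)x(1)-g(1)+g(0)$ and $d_1\coloneqq g(1)-(1-\beta)x(1)$. Then, as $n\to\infty$, with a suitable $1$-periodic continuous function $\Phi$: (1) If $d_0=d_1=0$, then $x(n)=n^{\log_2(\alpha+\beta)}\Phi(\{\log_2n\})$ (exactly, with no error term). (2a) If $d_0\ne0$ or $d_1\ne0$, and $\alpha+\beta>1$, then for every $\varepsilon>0$, $x(n)=n^{\log_2(\alpha+\beta)}\Phi(\{\log_2n\})+O\big(n^{\log_2\max\{\alpha,\beta,1\}+[\max\{\alpha,\beta\}=1]\varepsilon}(\log n)^{[\max\{\alpha,\beta\}<1]}\big)$. (2b) If $d_0\ne0$ or $d_1\ne0$, and $\alpha+\beta\le1$, then $x(n)=O\big((\log n)^{[\alpha+\beta=1\text{ and }d_0+d_1\ne0]}\big)$.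
   Context: $\{z\}=z-\lfloor z\rfloor$ denotes the fractional part. Iverson's bracket: $[S]=1$ if $S$ is true and $0$ otherwise. Here $g(0)=g(1)=c_0$. *)

From Stdlib Require Export Reals ClassicalDescription.
Open Scope R_scope.

Definition log2 (x : R) : R := ln x / ln 2.

(* fractional part {z} = z - floor z  (Stdlib: Int_part = floor) *)
Definition frac (z : R) : R := frac_part z.

Definition iverson (P : Prop) : R :=
  if excluded_middle_informative P then 1 else 0.

Definition ivpow (y : R) (P : Prop) : R :=
  if excluded_middle_informative P then y else 1.

Definition bigO (f h : nat -> R) : Prop :=
  exists C : R, exists N : nat, forall n : nat, (N <= n)%nat -> Rabs (f n) <= C * Rabs (h n).

Definition eventually_nat (P : nat -> Prop) : Prop :=
  exists N : nat, forall n : nat, (N <= n)%nat -> P n.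

Definition periodic1_continuous (Phi : R -> R) : Prop :=
  continuity Phi /\ forall t : R, Phi (t + 1) = Phi t.

Definition main_term (alpha beta : R) (Phi : R -> R) (n : nat) : R :=
  Rpower (INR n) (log2 (alpha + beta)) * Phi (frac (log2 (INR n))).

(* For alpha + beta > 1, adding c0 / (alpha + beta - 1) to x makes the recurrence
   homogeneous (so in case (2a) the error term is a constant).  A solution y of the homogeneous
   recurrence satisfies y(2m) = (alpha + beta) y(m), hence
     H(t) := lim_k y(floor(2^k t)) / (alpha + beta)^k
   extends y (H(n) = y(n)) with H(2t) = (alpha + beta) H(t), and Phi(s) := H(2^s) / (alpha + beta)^s
   is 1-periodic, with y(n) = n^(log2 (alpha + beta)) Phi(log2 n).  The limit exists and is
   continuous because the increments obey y(2m+1) - y(2m) = beta (y(m+1) - y(m)) and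
   y(2m+2) - y(2m+1) = alpha (y(m+1) - y(m)): on [2^k, 2^(k+1)) they are O(max(alpha,beta,1)^k),
   which is geometrically smaller than (alpha + beta)^k.
   For alpha + beta <= 1, induction over dyadic blocks bounds |x(n)| by M + j |c0| on [1, 2^j]
   for a suitable M: this is O(log n) in general and bounded unless alpha + beta = 1, c0 <> 0. *)

From Stdlib Require Import Reals Lra Lia ZArith.
From Coquelicot Require Import Coquelicot.
Open Scope R_scope.

Definition nat_floor (x : R) : nat := Z.to_nat (Int_part x).

Lemma INR_nat_floor x : 0 <= x -> INR (nat_floor x) = IZR (Int_part x).
Proof.
  intros Hx. destruct (base_Int_part x) as [_ Hup].
  assert (Hz : (-1 < Int_part x)%Z) by (apply lt_IZR; lra).
  unfold nat_floor. rewrite INR_IZR_INZ, Z2Nat.id by lia. reflexivity.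
Qed.

Lemma nat_floor_spec x : 0 <= x -> INR (nat_floor x) <= x < INR (nat_floor x) + 1.
Proof.
  intros Hx. rewrite INR_nat_floor by exact Hx.
  destruct (base_Int_part x). lra.
Qed.

Lemma frac_nat_floor x : 0 <= x -> frac x = x - INR (nat_floor x).
Proof. intros Hx. unfold frac, frac_part. rewrite INR_nat_floor by exact Hx. reflexivity. Qed.

Lemma nat_floor_unique m x : INR m <= x < INR m + 1 -> nat_floor x = m.
Proof.
  intros Hm. apply INR_eq.
  pose proof (nat_floor_spec x ltac:(pose proof (pos_INR m); lra)) as Hx.
  rewrite INR_nat_floor in * by (pose proof (pos_INR m); lra).
  rewrite INR_IZR_INZ in *. f_equal.
  apply Z.le_antisymm; apply Z.lt_succ_r; apply lt_IZR; rewrite succ_IZR; lra.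
Qed.

Lemma nat_floor_INR n : nat_floor (INR n) = n.
Proof. apply nat_floor_unique. lra. Qed.

Lemma nat_floor_double x : 0 <= x ->
  nat_floor (2 * x) = (2 * nat_floor x)%nat \/ nat_floor (2 * x) = (2 * nat_floor x + 1)%nat.
Proof.
  intros Hx. destruct (nat_floor_spec x Hx).
  destruct (Rlt_or_le x (INR (nat_floor x) + /2)); [left|right];
    apply nat_floor_unique; rewrite ?plus_INR, mult_INR; simpl; lra.
Qed.

Lemma nat_floor_ge1 x : 1 <= x -> (1 <= nat_floor x)%nat.
Proof.
  intros Hx. destruct (nat_floor_spec x) as [_ Hlt]; [lra|].
  destruct (nat_floor x); [simpl in Hlt; lra | lia].
Qed.

Lemma ln2_pos : 0 < ln 2.
Proof. rewrite <- ln_1. apply ln_increasing; lra. Qed.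

Lemma log2_nonneg x : 1 <= x -> 0 <= log2 x.
Proof.
  intros Hx. unfold log2. apply Rdiv_le_0_compat; [|exact ln2_pos].
  rewrite <- ln_1. apply ln_le; lra.
Qed.

Lemma INR_le_log2 j n : (2 ^ j <= n)%nat -> INR j <= ln (INR n) / ln 2.
Proof.
  intros Hjn. pose proof ln2_pos.
  apply Rmult_le_reg_r with (ln 2); [lra|]. unfold Rdiv. rewrite Rmult_assoc, Rinv_l, Rmult_1_r by lra.
  rewrite <- ln_pow by lra. apply ln_le; [apply pow_lt; lra|].
  replace 2 with (INR 2) by reflexivity. rewrite <- pow_INR. apply le_INR. exact Hjn.
Qed.

Lemma ln_INR_ge1 n : (3 <= n)%nat -> 1 <= ln (INR n).
Proof.
  intros Hn. rewrite <- (ln_exp 1). apply ln_le; [apply exp_pos|].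
  pose proof exp_le_3. apply (le_INR 3) in Hn. simpl in Hn. lra.
Qed.

Lemma Rpower_2_log2 x : 0 < x -> Rpower 2 (log2 x) = x.
Proof.
  intros Hx. unfold Rpower, log2. pose proof ln2_pos.
  replace (ln x / ln 2 * ln 2) with (ln x) by (field; lra). apply exp_ln, Hx.
Qed.

Lemma Rpower_log2_comm l x : Rpower l (log2 x) = Rpower x (log2 l).
Proof. unfold Rpower, log2. pose proof ln2_pos. f_equal. field. lra. Qed.

Lemma continuity_Rpower_exponent x : continuity (Rpower x).
Proof.
  intros s. unfold Rpower. apply (continuity_pt_comp (fun s => s * ln x) exp).
  - apply continuity_pt_mult; [apply continuity_pt_id|].
    apply continuity_pt_const. intros u v. reflexivity.
  - apply derivable_continuous, derivable_exp.
Qed.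

Lemma Rabs_div_pos x d : 0 < d -> Rabs (x / d) = Rabs x / d.
Proof. intros Hd. unfold Rdiv. rewrite Rabs_mult, Rabs_inv, (Rabs_pos_eq d) by lra. reflexivity. Qed.

Lemma pow_eventually_lt r eps : 0 <= r < 1 -> 0 < eps ->
  exists N, forall n, (N <= n)%nat -> r ^ n < eps.
Proof.
  intros Hr Heps. destruct (pow_lt_1_zero r ltac:(rewrite Rabs_pos_eq; lra) eps Heps) as [N HN].
  exists N. intros n Hn. specialize (HN n Hn). rewrite Rabs_pos_eq in HN by (apply pow_le; lra).
  exact HN.
Qed.

Section GeometricCauchy.

Variables (u : nat -> R) (B r : R) (e : nat).
Hypotheses (HB : 0 <= B) (Hr : 0 <= r < 1)
  (Hstep : forall k, (e <= k)%nat -> Rabs (u (S k) - u k) <= B * r ^ k).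

Lemma geometric_tail k n : (e <= k <= n)%nat -> Rabs (u n - u k) <= B * r ^ k / (1 - r).
Proof.
  intros Hkn.
  assert (Htel : forall d, Rabs (u (k + d)%nat - u k) <= B * (r ^ k - r ^ (k + d)) / (1 - r)).
  { induction d as [|d IH].
    - rewrite Nat.add_0_r, Rminus_diag, Rabs_R0. unfold Rdiv. rewrite Rminus_diag. lra.
    - replace (k + S d)%nat with (S (k + d)) by lia.
      replace (u (S (k + d)) - u k) with ((u (S (k + d)) - u (k + d)%nat) + (u (k + d)%nat - u k))
        by ring.
      eapply Rle_trans; [apply Rabs_triang|].
      replace (B * (r ^ k - r ^ S (k + d)) / (1 - r))
        with (B * r ^ (k + d) + B * (r ^ k - r ^ (k + d)) / (1 - r)) by (simpl; field; lra).
      specialize (Hstep (k + d)%nat ltac:(lia)). lra. }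
  replace n with (k + (n - k))%nat by lia.
  eapply Rle_trans; [apply Htel|].
  apply Rmult_le_compat_r; [apply Rlt_le, Rinv_0_lt_compat; lra|].
  pose proof (pow_le r (k + (n - k)) ltac:(lra)). nra.
Qed.

Lemma geometric_cauchy_lim :
  exists l : R, is_lim_seq u l /\ forall k, (e <= k)%nat -> Rabs (l - u k) <= B * r ^ k / (1 - r).
Proof.
  assert (Hex : ex_finite_lim_seq u).
  { apply ex_lim_seq_cauchy_corr. intros eps.
    destruct (pow_eventually_lt r (eps * (1 - r) / (2 * (B + 1))) Hr) as [N HN].
    { pose proof (cond_pos eps). apply Rdiv_lt_0_compat; nra. }
    exists (max N e). intros n m Hn Hm.
    set (K := max N e).
    specialize (HN K ltac:(unfold K; lia)).
    assert (Hn' := geometric_tail K n ltac:(unfold K; lia)).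
    assert (Hm' := geometric_tail K m ltac:(unfold K; lia)).
    assert (Hsmall : B * r ^ K / (1 - r) < eps / 2).
    { pose proof (cond_pos eps). pose proof (pow_le r K ltac:(lra)).
      apply Rmult_lt_reg_r with (1 - r); [lra|].
      replace (B * r ^ K / (1 - r) * (1 - r)) with (B * r ^ K) by (field; lra).
      apply Rmult_lt_compat_r with (r := 2 * (B + 1)) in HN; [|lra].
      replace (eps * (1 - r) / (2 * (B + 1)) * (2 * (B + 1))) with (eps * (1 - r)) in HN
        by (field; lra).
      nra. }
    replace (u n - u m) with ((u n - u K) - (u m - u K)) by ring.
    eapply Rle_lt_trans; [apply Rabs_triang|]. rewrite Rabs_Ropp. lra. }
  destruct Hex as [l Hl]. exists l. split; [exact Hl|].
  intros k Hk.
  assert (Hlim : is_lim_seq (fun n => Rabs (u (n + k)%nat - u k)) (Rabs (l - u k))).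
  { apply (is_lim_seq_abs _ (Finite (l - u k))).
    apply is_lim_seq_minus'; [apply is_lim_seq_incr_n; exact Hl | apply is_lim_seq_const]. }
  exact (is_lim_seq_le _ (fun _ => B * r ^ k / (1 - r)) _ _
           (fun n => geometric_tail k (n + k) ltac:(lia)) Hlim (is_lim_seq_const _)).
Qed.

End GeometricCauchy.

Lemma continuity_pt_of_local_approx (f : R -> R) x0 :
  (forall eps, 0 < eps -> exists (g : R -> R) (delta : R), 0 < delta /\
     forall x, Rabs (x - x0) < delta -> Rabs (f x - g x) <= eps /\ Rabs (g x - g x0) <= eps) ->
  continuity_pt f x0.
Proof.
  intros Happrox. apply continuity_pt_locally. intros eps.
  destruct (Happrox (eps / 4) ltac:(pose proof (cond_pos eps); lra)) as [g [delta [Hdelta Hg]]].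
  exists (mkposreal delta Hdelta). intros x Hx.
  destruct (Hg x Hx) as [Hfx Hgx].
  destruct (Hg x0 ltac:(rewrite Rminus_diag, Rabs_R0; lra)) as [Hf0 _].
  replace (f x - f x0) with ((f x - g x) + (g x - g x0) - (f x0 - g x0)) by ring.
  eapply Rle_lt_trans; [apply Rabs_triang|]. rewrite Rabs_Ropp.
  pose proof (Rabs_triang (f x - g x) (g x - g x0)). pose proof (cond_pos eps). lra.
Qed.

Lemma exists_pow2_gt x : exists n : nat, x < 2 ^ n.
Proof.
  destruct (INR_unbounded x) as [n Hn]. exists n.
  assert (Hlt : (n < 2 ^ n)%nat) by (apply Nat.pow_gt_lin_r; lia).
  apply lt_INR in Hlt. rewrite pow_INR in Hlt. replace (INR 2) with 2 in Hlt by (simpl; lra). lra.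
Qed.

Lemma dyadic_window t0 : 0 < t0 -> exists e c : nat, forall t k,
  t0 / 2 <= t <= 2 * t0 -> (e <= k)%nat -> (1 <= nat_floor (2 ^ k * t) < 2 ^ S (k + c))%nat.
Proof.
  intros Ht0.
  destruct (exists_pow2_gt (2 / t0)) as [e He]. destruct (exists_pow2_gt (2 * t0)) as [c Hc].
  exists e, c. intros t k Ht Hk.
  assert (Hek : 2 ^ e <= 2 ^ k) by (apply Rle_pow; [lra|lia]).
  assert (Hge1 : 1 <= 2 ^ k * t).
  { apply Rmult_lt_compat_r with (r := t0 / 2) in He; [|lra].
    replace (2 / t0 * (t0 / 2)) with 1 in He by (field; lra).
    pose proof (pow_lt 2 e ltac:(lra)). nra. }
  split; [apply nat_floor_ge1; exact Hge1|].
  destruct (nat_floor_spec (2 ^ k * t)) as [Hfl _]; [lra|].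
  apply INR_lt. rewrite pow_INR. replace (INR 2) with 2 by (simpl; lra).
  rewrite <- tech_pow_Rmult, pow_add.
  pose proof (pow_lt 2 k ltac:(lra)). pose proof (pow_lt 2 c ltac:(lra)).
  assert (2 ^ k * t <= 2 ^ k * (2 * t0)) by (apply Rmult_le_compat_l; lra).
  assert (2 ^ k * (2 * t0) < 2 ^ k * 2 ^ c) by (apply Rmult_lt_compat_l; lra).
  lra.
Qed.

Definition halving_rec (a b c : R) (y : nat -> R) : Prop :=
  forall n : nat, (2 <= n)%nat -> y n = a * y (n / 2)%nat + b * y ((n + 1) / 2)%nat + c.

Lemma div2_double_add q r : (r < 2)%nat -> ((2 * q + r) / 2 = q)%nat.
Proof. intros Hr. symmetry. apply Nat.div_unique with r; lia. Qed.

Section Recurrence.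

Variables (a b c : R) (y : nat -> R).
Hypothesis Hy : halving_rec a b c y.

Lemma halving_rec_even m : (1 <= m)%nat -> y (2 * m)%nat = (a + b) * y m + c.
Proof.
  intros Hm. rewrite Hy by lia.
  rewrite <- (Nat.add_0_r (2 * m)), div2_double_add by lia.
  replace (2 * m + 0 + 1)%nat with (2 * m + 1)%nat by lia.
  rewrite div2_double_add by lia. ring.
Qed.

Lemma halving_rec_odd m : (1 <= m)%nat -> y (2 * m + 1)%nat = a * y m + b * y (S m) + c.
Proof.
  intros Hm. rewrite Hy by lia. rewrite div2_double_add by lia.
  replace (2 * m + 1 + 1)%nat with (2 * S m + 0)%nat by lia.
  rewrite div2_double_add by lia. reflexivity.
Qed.

Lemma halving_rec_shift : a + b <> 1 -> halving_rec a b 0 (fun n => y n + c / (a + b - 1)).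
Proof.
  intros Hab n Hn. rewrite Hy by exact Hn. field.
  intros Hab'. apply Hab. lra.
Qed.

Hypotheses (Ha : 0 < a) (Hb : 0 < b) (Hab : a + b <= 1).

Lemma halving_rec_growth M e : Rabs (y 1%nat) <= M -> 0 <= e -> (a + b) * M + Rabs c <= M + e ->
  forall j n, (1 <= n <= 2 ^ j)%nat -> Rabs (y n) <= M + INR j * e.
Proof.
  intros Hy1 He Hstep. induction j as [|j IH]; intros n Hn.
  - replace n with 1%nat by (simpl in Hn; lia). simpl. lra.
  - rewrite S_INR. assert (Hje : 0 <= INR j * e) by (apply Rmult_le_pos; [apply pos_INR|lra]).
    assert (H2j : (2 ^ S j = 2 * 2 ^ j)%nat) by reflexivity.
    destruct (Nat.eq_dec n 1) as [->|Hn1]; [lra|].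
    destruct (Nat.Even_or_Odd n) as [[m ->]|[m ->]].
    + rewrite halving_rec_even by lia.
      assert (Hm := IH m ltac:(lia)).
      eapply Rle_trans; [apply Rabs_triang|].
      rewrite Rabs_mult, (Rabs_pos_eq (a + b)) by lra. nra.
    + rewrite halving_rec_odd by lia.
      assert (Hm := IH m ltac:(lia)). assert (HSm := IH (S m) ltac:(lia)).
      eapply Rle_trans; [apply Rabs_triang|].
      eapply Rle_trans; [apply Rplus_le_compat_r, Rabs_triang|].
      rewrite !Rabs_mult, (Rabs_pos_eq a), (Rabs_pos_eq b) by lra. nra.
Qed.

Lemma halving_rec_bounded M : Rabs (y 1%nat) <= M -> (a + b) * M + Rabs c <= M ->
  forall n, (1 <= n)%nat -> Rabs (y n) <= M.
Proof.
  intros Hy1 Hstep n Hn.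
  assert (Hn2 : (n < 2 ^ n)%nat) by (apply Nat.pow_gt_lin_r; lia).
  pose proof (halving_rec_growth M 0 Hy1 (Rle_refl 0) ltac:(lra) n n ltac:(lia)).
  lra.
Qed.

Lemma halving_rec_zero : c = 0 -> y 1%nat = 0 -> forall n, (1 <= n)%nat -> y n = 0.
Proof.
  intros Hc Hy1 n Hn. apply Rabs_eq_0, Rle_antisym; [|apply Rabs_pos].
  apply halving_rec_bounded; [rewrite Hy1, Rabs_R0; lra|rewrite Hc, Rabs_R0; lra|exact Hn].
Qed.

Lemma halving_rec_ex_bound : a + b < 1 \/ c = 0 ->
  exists M, forall n, (1 <= n)%nat -> Rabs (y n) <= M.
Proof.
  intros [Hlt|Hc0].
  - exists (Rabs (y 1%nat) + Rabs c / (1 - (a + b))). apply halving_rec_bounded.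
    + assert (0 <= Rabs c / (1 - (a + b))) by (apply Rdiv_le_0_compat; [apply Rabs_pos|lra]). lra.
    + pose proof (Rabs_pos (y 1%nat)).
      replace ((a + b) * (Rabs (y 1%nat) + Rabs c / (1 - (a + b))) + Rabs c)
        with ((a + b) * Rabs (y 1%nat) + Rabs c / (1 - (a + b))) by (field; lra).
      nra.
  - exists (Rabs (y 1%nat)). apply halving_rec_bounded; [lra|].
    rewrite Hc0, Rabs_R0. pose proof (Rabs_pos (y 1%nat)). nra.
Qed.

Lemma halving_rec_log_bound :
  exists C, forall n, (2 <= n)%nat -> Rabs (y n) <= C * ln (INR n).
Proof.
  pose proof ln2_pos as Hln2.
  exists ((Rabs (y 1%nat) + 2 * Rabs c) / ln 2). intros n Hn.
  assert (Hlog := Nat.log2_spec n ltac:(lia)).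
  assert (Hj := INR_le_log2 (Nat.log2 n) n ltac:(lia)).
  assert (H1 := INR_le_log2 1 n ltac:(simpl; lia)). simpl in H1.
  assert (Hbound := halving_rec_growth (Rabs (y 1%nat)) (Rabs c) (Rle_refl _) (Rabs_pos c)
                      ltac:(pose proof (Rabs_pos (y 1%nat)); nra) (S (Nat.log2 n)) n ltac:(lia)).
  rewrite S_INR in Hbound.
  replace ((Rabs (y 1%nat) + 2 * Rabs c) / ln 2 * ln (INR n))
    with ((Rabs (y 1%nat) + 2 * Rabs c) * (ln (INR n) / ln 2)) by (field; lra).
  pose proof (Rabs_pos (y 1%nat)). pose proof (Rabs_pos c). nra.
Qed.

End Recurrence.

Definition fwd_diff (y : nat -> R) (m : nat) : R := y (S m) - y m.

Section DyadicLimit.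

Variables (a b : R) (y : nat -> R).
Hypotheses (Ha : 0 < a) (Hb : 0 < b) (Hab : 1 < a + b) (Hy : halving_rec a b 0 y).

Let nu := Rmax (Rmax a b) 1.
Let r := nu / (a + b).

Lemma nu_bounds : a <= nu /\ b <= nu /\ 1 <= nu.
Proof.
  unfold nu. pose proof (Rmax_l (Rmax a b) 1). pose proof (Rmax_r (Rmax a b) 1).
  pose proof (Rmax_l a b). pose proof (Rmax_r a b). lra.
Qed.

Lemma ratio_bounds : 0 <= r < 1.
Proof.
  assert (Hnu : nu < a + b) by (unfold nu; repeat apply Rmax_lub_lt; lra).
  pose proof nu_bounds. unfold r. split.
  - apply Rdiv_le_0_compat; lra.
  - apply Rmult_lt_reg_r with (a + b); [lra|]. unfold Rdiv. rewrite Rmult_assoc, Rinv_l; lra.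
Qed.

Lemma y_double m : (1 <= m)%nat -> y (2 * m)%nat = (a + b) * y m.
Proof. intros Hm. rewrite (halving_rec_even a b 0 y Hy m Hm). ring. Qed.

Lemma y_double_succ m : (1 <= m)%nat -> y (2 * m + 1)%nat = a * y m + b * y (S m).
Proof. intros Hm. rewrite (halving_rec_odd a b 0 y Hy m Hm). ring. Qed.

Lemma y_pow2_mul k m : (1 <= m)%nat -> y (2 ^ k * m)%nat = (a + b) ^ k * y m.
Proof.
  intros Hm. induction k as [|k IH]; [simpl; rewrite Nat.add_0_r; ring|].
  assert (H2k : (1 <= 2 ^ k)%nat) by (apply Nat.le_succ_l, Nat.neq_0_lt_0, Nat.pow_nonzero; lia).
  replace (2 ^ S k * m)%nat with (2 * (2 ^ k * m))%nat by (simpl; lia).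
  rewrite y_double, IH by nia. simpl. ring.
Qed.

Lemma fwd_diff_double m : (1 <= m)%nat -> fwd_diff y (2 * m) = b * fwd_diff y m.
Proof.
  intros Hm. unfold fwd_diff. replace (S (2 * m)) with (2 * m + 1)%nat by lia.
  rewrite y_double_succ, y_double by exact Hm. ring.
Qed.

Lemma fwd_diff_double_succ m : (1 <= m)%nat -> fwd_diff y (2 * m + 1) = a * fwd_diff y m.
Proof.
  intros Hm. unfold fwd_diff. replace (S (2 * m + 1)) with (2 * S m)%nat by lia.
  rewrite y_double_succ, y_double by lia. ring.
Qed.

Lemma fwd_diff_bound j m : (1 <= m < 2 ^ S j)%nat ->
  Rabs (fwd_diff y m) <= Rabs (fwd_diff y 1) * nu ^ j.
Proof.
  destruct nu_bounds as [Han [Hbn H1n]].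
  revert m. induction j as [|j IH]; intros m Hm.
  - replace m with 1%nat by (simpl in Hm; lia). simpl. lra.
  - assert (Hnuj : 0 <= nu ^ j) by (apply pow_le; lra).
    assert (HD1 := Rabs_pos (fwd_diff y 1)).
    destruct (Nat.eq_dec m 1) as [->|Hm1].
    { pose proof (pow_R1_Rle nu (S j) H1n). nra. }
    replace (2 ^ S (S j))%nat with (2 * 2 ^ S j)%nat in Hm by reflexivity.
    set (P := (2 ^ S j)%nat) in *. clearbody P.
    destruct (Nat.Even_or_Odd m) as [[q ->]|[q ->]].
    + rewrite fwd_diff_double, Rabs_mult, Rabs_pos_eq by lia || lra.
      specialize (IH q ltac:(lia)). pose proof (Rabs_pos (fwd_diff y q)). simpl. nra.
    + rewrite fwd_diff_double_succ, Rabs_mult, Rabs_pos_eq by lia || lra.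
      specialize (IH q ltac:(lia)). pose proof (Rabs_pos (fwd_diff y q)). simpl. nra.
Qed.

Lemma scaled_fwd_diff_bound k c m : (1 <= m < 2 ^ S (k + c))%nat ->
  Rabs (fwd_diff y m) / (a + b) ^ k <= Rabs (fwd_diff y 1) * nu ^ c * r ^ k.
Proof.
  intros Hm. assert (Hlk : 0 < (a + b) ^ k) by (apply pow_lt; lra).
  replace (Rabs (fwd_diff y 1) * nu ^ c * r ^ k)
    with (Rabs (fwd_diff y 1) * nu ^ (k + c) / (a + b) ^ k)
    by (unfold r, Rdiv; rewrite pow_add, Rpow_mult_distr, pow_inv; field; lra).
  apply Rmult_le_compat_r; [apply Rlt_le, Rinv_0_lt_compat; exact Hlk|].
  exact (fwd_diff_bound (k + c) m Hm).
Qed.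

Definition dyadic_approx (k : nat) (t : R) : R := y (nat_floor (2 ^ k * t)) / (a + b) ^ k.

Lemma dyadic_approx_succ k t : 0 <= t -> (1 <= nat_floor (2 ^ k * t))%nat ->
  Rabs (dyadic_approx (S k) t - dyadic_approx k t)
    <= Rabs (fwd_diff y (nat_floor (2 ^ k * t))) / (a + b) ^ k.
Proof.
  intros Ht Hm. assert (Hlk : 0 < (a + b) ^ k) by (apply pow_lt; lra).
  unfold dyadic_approx. replace (2 ^ S k * t) with (2 * (2 ^ k * t)) by (simpl; ring).
  set (m := nat_floor (2 ^ k * t)) in *.
  assert (H2kt : 0 <= 2 ^ k * t) by (apply Rmult_le_pos; [apply pow_le|]; lra).
  rewrite <- tech_pow_Rmult.
  destruct (nat_floor_double _ H2kt) as [E|E]; fold m in E; rewrite E.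
  - rewrite y_double by exact Hm.
    replace ((a + b) * y m / ((a + b) * (a + b) ^ k) - y m / (a + b) ^ k) with 0 by (field; lra).
    rewrite Rabs_R0. apply Rdiv_le_0_compat; [apply Rabs_pos|exact Hlk].
  - rewrite y_double_succ by exact Hm.
    replace ((a * y m + b * y (S m)) / ((a + b) * (a + b) ^ k) - y m / (a + b) ^ k)
      with (b / (a + b) * (fwd_diff y m / (a + b) ^ k)) by (unfold fwd_diff; field; lra).
    rewrite Rabs_mult, !Rabs_div_pos, (Rabs_pos_eq b) by lra.
    assert (Hba : b / (a + b) = 1 - a / (a + b)) by (field; lra).
    assert (0 < a / (a + b)) by (apply Rdiv_lt_0_compat; lra).
    assert (0 <= Rabs (fwd_diff y m) / (a + b) ^ k) by (apply Rdiv_le_0_compat; [apply Rabs_pos|lra]).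
    nra.
Qed.

Lemma dyadic_approx_near k t s : 0 <= t -> 0 <= s -> Rabs (2 ^ k * t - 2 ^ k * s) < 1 ->
  Rabs (dyadic_approx k t - dyadic_approx k s)
    <= (Rabs (fwd_diff y (nat_floor (2 ^ k * t))) + Rabs (fwd_diff y (nat_floor (2 ^ k * s))))
       / (a + b) ^ k.
Proof.
  intros Ht Hs Hts. assert (Hlk : 0 < (a + b) ^ k) by (apply pow_lt; lra).
  assert (H2k : 0 <= 2 ^ k) by (apply pow_le; lra).
  destruct (nat_floor_spec (2 ^ k * t)) as [Ht1 Ht2]; [apply Rmult_le_pos; lra|].
  destruct (nat_floor_spec (2 ^ k * s)) as [Hs1 Hs2]; [apply Rmult_le_pos; lra|].
  unfold dyadic_approx.
  set (m1 := nat_floor (2 ^ k * t)) in *. set (m2 := nat_floor (2 ^ k * s)) in *. clearbody m1 m2.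
  apply Rabs_def2 in Hts.
  assert (L1 : (m1 < m2 + 2)%nat) by (apply INR_lt; rewrite plus_INR; simpl; lra).
  assert (L2 : (m2 < m1 + 2)%nat) by (apply INR_lt; rewrite plus_INR; simpl; lra).
  pose proof (Rabs_pos (fwd_diff y m1)). pose proof (Rabs_pos (fwd_diff y m2)).
  replace (y m1 / (a + b) ^ k - y m2 / (a + b) ^ k) with ((y m1 - y m2) / (a + b) ^ k)
    by (field; lra).
  rewrite Rabs_div_pos by exact Hlk.
  apply Rmult_le_compat_r; [apply Rlt_le, Rinv_0_lt_compat; exact Hlk|].
  destruct (lt_eq_lt_dec m1 m2) as [[Hlt | ->] | Hgt].
  - replace m2 with (S m1) in * by lia. rewrite <- Rabs_Ropp. unfold fwd_diff in *.
    replace (- (y m1 - y (S m1))) with (y (S m1) - y m1) by ring. lra.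
  - rewrite Rminus_diag, Rabs_R0. lra.
  - replace m1 with (S m2) in * by lia. unfold fwd_diff in *. lra.
Qed.

Definition dyadic_limit (t : R) : R := real (Lim_seq (fun k => dyadic_approx k t)).

Lemma dyadic_limit_local t0 : 0 < t0 -> exists (e : nat) (B : R), 0 <= B /\
  forall t, t0 / 2 <= t <= 2 * t0 ->
    is_lim_seq (fun k => dyadic_approx k t) (dyadic_limit t) /\
    forall k, (e <= k)%nat ->
      Rabs (dyadic_limit t - dyadic_approx k t) <= B * r ^ k / (1 - r) /\
      Rabs (fwd_diff y (nat_floor (2 ^ k * t))) / (a + b) ^ k <= B * r ^ k.
Proof.
  intros Ht0. destruct (dyadic_window t0 Ht0) as [e [c Hwin]].
  pose proof nu_bounds as [_ [_ H1n]].
  set (B := Rabs (fwd_diff y 1) * nu ^ c).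
  assert (HB : 0 <= B) by (apply Rmult_le_pos; [apply Rabs_pos|apply pow_le; lra]).
  exists e, B. split; [exact HB|]. intros t Ht.
  assert (Hscaled : forall k, (e <= k)%nat ->
    Rabs (fwd_diff y (nat_floor (2 ^ k * t))) / (a + b) ^ k <= B * r ^ k).
  { intros k Hk. apply scaled_fwd_diff_bound, Hwin; assumption. }
  destruct (geometric_cauchy_lim (fun k => dyadic_approx k t) B r e HB ratio_bounds)
    as [l [Hl Htail]].
  { intros k Hk. eapply Rle_trans; [apply dyadic_approx_succ|apply Hscaled, Hk]; [lra|].
    apply Hwin; assumption. }
  assert (Hlim : dyadic_limit t = l)
    by (unfold dyadic_limit; rewrite (is_lim_seq_unique _ _ Hl); reflexivity).
  rewrite Hlim. split; [exact Hl|]. intros k Hk. split; [apply Htail, Hk|apply Hscaled, Hk].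
Qed.

Lemma dyadic_limit_continuous t0 : 0 < t0 -> continuity_pt dyadic_limit t0.
Proof.
  intros Ht0. destruct (dyadic_limit_local t0 Ht0) as [e [B [HB Hloc]]].
  pose proof ratio_bounds as Hr.
  apply continuity_pt_of_local_approx. intros eps Heps.
  destruct (pow_eventually_lt r (eps * (1 - r) / (2 * (B + 1))) Hr) as [N HN].
  { apply Rdiv_lt_0_compat; nra. }
  set (k := max N e). specialize (HN k ltac:(unfold k; lia)).
  assert (HBr : 2 * (B * r ^ k) <= eps * (1 - r)).
  { pose proof (pow_le r k ltac:(lra)).
    apply Rmult_lt_compat_r with (r := 2 * (B + 1)) in HN; [|lra].
    replace (eps * (1 - r) / (2 * (B + 1)) * (2 * (B + 1))) with (eps * (1 - r)) in HN by (field; lra).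
    nra. }
  assert (H2k : 0 < 2 ^ k) by (apply pow_lt; lra).
  exists (dyadic_approx k), (Rmin (t0 / 2) (/ 2 ^ k)). split.
  { apply Rmin_pos; [lra|apply Rinv_0_lt_compat; exact H2k]. }
  intros x Hx.
  assert (Hx1 : Rabs (x - t0) < t0 / 2) by (eapply Rlt_le_trans; [exact Hx|apply Rmin_l]).
  assert (Hx2 : Rabs (x - t0) < / 2 ^ k) by (eapply Rlt_le_trans; [exact Hx|apply Rmin_r]).
  apply Rabs_def2 in Hx1.
  destruct (Hloc x ltac:(lra)) as [_ Hxk]. destruct (Hloc t0 ltac:(lra)) as [_ Ht0k].
  destruct (Hxk k ltac:(unfold k; lia)) as [Hxtail Hxdiff].
  destruct (Ht0k k ltac:(unfold k; lia)) as [_ Ht0diff].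
  split.
  - eapply Rle_trans; [exact Hxtail|].
    apply Rmult_le_reg_r with (1 - r); [lra|].
    replace (B * r ^ k / (1 - r) * (1 - r)) with (B * r ^ k) by (field; lra).
    pose proof (pow_le r k ltac:(lra)). nra.
  - eapply Rle_trans.
    { apply dyadic_approx_near; [lra|lra|].
      replace (2 ^ k * x - 2 ^ k * t0) with (2 ^ k * (x - t0)) by ring.
      rewrite Rabs_mult, Rabs_pos_eq by lra.
      apply Rmult_lt_reg_r with (/ 2 ^ k); [apply Rinv_0_lt_compat; exact H2k|].
      replace (2 ^ k * Rabs (x - t0) * / 2 ^ k) with (Rabs (x - t0)) by (field; lra).
      rewrite Rmult_1_l. exact Hx2. }
    unfold Rdiv in *. rewrite Rmult_plus_distr_r. nra.
Qed.

Lemma dyadic_limit_double t : 0 < t -> dyadic_limit (2 * t) = (a + b) * dyadic_limit t.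
Proof.
  intros Ht. destruct (dyadic_limit_local t Ht) as [e [B [_ Hloc]]].
  destruct (Hloc t ltac:(lra)) as [Hl _].
  assert (Hshift : forall k, dyadic_approx k (2 * t) = (a + b) * dyadic_approx (S k) t).
  { intros k. unfold dyadic_approx. replace (2 ^ k * (2 * t)) with (2 ^ S k * t) by (simpl; ring).
    rewrite <- (tech_pow_Rmult (a + b)). field. split; [apply pow_nonzero|]; lra. }
  apply is_lim_seq_incr_1, (is_lim_seq_scal_l _ (a + b)) in Hl.
  unfold dyadic_limit at 1. rewrite (Lim_seq_ext _ _ Hshift), (is_lim_seq_unique _ _ Hl). reflexivity.
Qed.

Lemma dyadic_limit_INR n : (1 <= n)%nat -> dyadic_limit (INR n) = y n.
Proof.
  intros Hn.
  assert (Hconst : forall k, dyadic_approx k (INR n) = y n).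
  { intros k. unfold dyadic_approx.
    replace (2 ^ k * INR n) with (INR (2 ^ k * n)) by (rewrite mult_INR, pow_INR; reflexivity).
    rewrite nat_floor_INR, y_pow2_mul by exact Hn. field. apply pow_nonzero. lra. }
  unfold dyadic_limit. rewrite (Lim_seq_ext _ _ Hconst), Lim_seq_const. reflexivity.
Qed.

Definition periodic_part (s : R) : R := dyadic_limit (Rpower 2 s) / Rpower (a + b) s.

Lemma periodic_part_shift1 s : periodic_part (s + 1) = periodic_part s.
Proof.
  unfold periodic_part. rewrite !Rpower_plus, !Rpower_1 by lra.
  rewrite (Rmult_comm (Rpower 2 s)), dyadic_limit_double by apply exp_pos.
  pose proof (exp_pos (s * ln (a + b))). unfold Rpower. field. lra.
Qed.

Lemma periodic_part_shift_nat s m : periodic_part (s + INR m) = periodic_part s.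
Proof.
  induction m as [|m IH]; [rewrite Rplus_0_r; reflexivity|].
  rewrite S_INR, <- Rplus_assoc, periodic_part_shift1. exact IH.
Qed.

Lemma periodic_part_continuous : continuity periodic_part.
Proof.
  intros s. apply continuity_pt_div.
  - apply (continuity_pt_comp (Rpower 2) dyadic_limit); [apply continuity_Rpower_exponent|].
    apply dyadic_limit_continuous, exp_pos.
  - apply continuity_Rpower_exponent.
  - pose proof (exp_pos (s * ln (a + b))). unfold Rpower. lra.
Qed.

Lemma main_term_periodic_part n : (1 <= n)%nat -> main_term a b periodic_part n = y n.
Proof.
  intros Hn. assert (HnR : 1 <= INR n) by (apply (le_INR 1); exact Hn).
  unfold main_term. rewrite frac_nat_floor by (apply log2_nonneg; exact HnR).
  rewrite <- (periodic_part_shift_nat _ (nat_floor (log2 (INR n)))).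
  replace (log2 (INR n) - INR (nat_floor (log2 (INR n))) + INR (nat_floor (log2 (INR n))))
    with (log2 (INR n)) by ring.
  unfold periodic_part.
  rewrite Rpower_2_log2, dyadic_limit_INR, (Rpower_log2_comm (a + b)) by (exact Hn || lra).
  pose proof (exp_pos (log2 (a + b) * ln (INR n))). unfold Rpower. field. lra.
Qed.

Lemma halving_rec_representation : exists Phi, periodic1_continuous Phi /\
  forall n, (1 <= n)%nat -> y n = main_term a b Phi n.
Proof.
  exists periodic_part. split; [split; [exact periodic_part_continuous|exact periodic_part_shift1]|].
  intros n Hn. symmetry. apply main_term_periodic_part, Hn.
Qed.

End DyadicLimit.

Lemma halving_rec_affine_representation a b c y : 0 < a -> 0 < b -> 1 < a + b ->
  halving_rec a b c y -> exists Phi, periodic1_continuous Phi /\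
    forall n, (1 <= n)%nat -> y n - main_term a b Phi n = - (c / (a + b - 1)).
Proof.
  intros Ha Hb Hab Hy.
  destruct (halving_rec_representation a b (fun n => y n + c / (a + b - 1)) Ha Hb Hab
              (halving_rec_shift a b c y Hy ltac:(lra))) as [Phi [HPhi Hrepr]].
  exists Phi. split; [exact HPhi|]. intros n Hn. rewrite <- (Hrepr n Hn). ring.
Qed.

Lemma bigO_of_bounded (f h : nat -> R) N M :
  (forall n, (N <= n)%nat -> Rabs (f n) <= M /\ 1 <= h n) -> bigO f h.
Proof.
  intros Hfh. exists M, N. intros n Hn. destruct (Hfh n Hn) as [Hf Hh].
  pose proof (Rabs_pos (f n)). rewrite (Rabs_pos_eq (h n)) by lra. nra.
Qed.

Lemma error_scale_ge1 n p P : (3 <= n)%nat -> 0 <= p ->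
  1 <= Rpower (INR n) p * ivpow (ln (INR n)) P.
Proof.
  intros Hn Hp. pose proof (ln_INR_ge1 n Hn) as Hln.
  assert (Hpow : 1 <= Rpower (INR n) p).
  { rewrite <- (Rpower_O (INR n)) by (apply (lt_INR 0); lia).
    apply Rle_Rpower; [apply (le_INR 1); lia|exact Hp]. }
  assert (Hiv : 1 <= ivpow (ln (INR n)) P)
    by (unfold ivpow; destruct excluded_middle_informative; lra).
  nra.
Qed.

Theorem mainTheorem5 (alpha beta c0 : R) (x : nat -> R)
  (Halpha : 0 < alpha) (Hbeta : 0 < beta)
  (Hrec : forall n : nat, (2 <= n)%nat ->
      x n = alpha * x (n / 2)%nat + beta * x ((n + 1) / 2)%nat + c0) :
  let d0 := (1 - beta) * x 1%nat - c0 + c0 in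
  let d1 := c0 - (1 - beta) * x 1%nat in
  (* (1) *)
  (d0 = 0 /\ d1 = 0 ->
     exists Phi : R -> R, periodic1_continuous Phi /\
       eventually_nat (fun n => x n = main_term alpha beta Phi n)) /\
  (* (2a) *)
  ((d0 <> 0 \/ d1 <> 0) -> alpha + beta > 1 ->
     exists Phi : R -> R, periodic1_continuous Phi /\
       forall eps : R, eps > 0 ->
         bigO (fun n => x n - main_term alpha beta Phi n)
              (fun n => Rpower (INR n)
                          (log2 (Rmax (Rmax alpha beta) 1)
                           + iverson (Rmax alpha beta = 1) * eps)
                        * ivpow (ln (INR n)) (Rmax alpha beta < 1))) /\
  (* (2b) *)
  ((d0 <> 0 \/ d1 <> 0) -> alpha + beta <= 1 ->
     bigO x (fun n => ivpow (ln (INR n)) (alpha + beta = 1 /\ d0 + d1 <> 0))).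
Proof.
  intros d0 d1.
  assert (Hc0 : d0 + d1 = c0) by (unfold d0, d1; ring).
  split; [|split].
  - intros [Hd0 Hd1]. assert (Hc : c0 = 0) by lra.
    destruct (Rlt_or_le 1 (alpha + beta)) as [Hab|Hab].
    + rewrite Hc in Hrec.
      destruct (halving_rec_representation alpha beta x Halpha Hbeta Hab Hrec) as [Phi [HPhi Hx]].
      exists Phi. split; [exact HPhi|]. exists 1%nat. exact Hx.
    + assert (Hx1 : x 1%nat = 0).
      { unfold d0 in Hd0. destruct (Rmult_integral (1 - beta) (x 1%nat)); lra. }
      exists (fun _ => 0). split; [split; [intros s; apply continuity_const; intros u v|]; reflexivity|].
      exists 1%nat. intros n Hn. unfold main_term. rewrite Rmult_0_r.
      exact (halving_rec_zero alpha beta c0 x Hrec Halpha Hbeta Hab Hc Hx1 n Hn).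
  - intros _ Hab.
    destruct (halving_rec_affine_representation alpha beta c0 x Halpha Hbeta Hab Hrec)
      as [Phi [HPhi Hx]].
    exists Phi. split; [exact HPhi|]. intros eps Heps.
    apply (bigO_of_bounded _ _ 3 (Rabs (c0 / (alpha + beta - 1)))). intros n Hn. split.
    + rewrite Hx, Rabs_Ropp by lia. lra.
    + apply error_scale_ge1; [exact Hn|].
      assert (Hiv : 0 <= iverson (Rmax alpha beta = 1)) by
        (unfold iverson; destruct excluded_middle_informative; lra).
      pose proof (log2_nonneg _ (Rmax_r (Rmax alpha beta) 1)). nra.
  - intros _ Hab. rewrite Hc0. unfold ivpow.
    destruct excluded_middle_informative as [[Hab1 Hc]|Hnot].
    + destruct (halving_rec_log_bound alpha beta c0 x Hrec Halpha Hbeta Hab) as [C HC].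
      exists C, 2%nat. intros n Hn. rewrite (Rabs_pos_eq (ln _)); [apply HC, Hn|].
      rewrite <- ln_1. apply ln_le; [lra|apply (le_INR 1); lia].
    + destruct (halving_rec_ex_bound alpha beta c0 x Hrec Halpha Hbeta Hab) as [M HM].
      { destruct (Req_dec c0 0); [right; assumption|left].
        destruct Hab as [Hlt|Heq]; [exact Hlt|]. exfalso. apply Hnot. split; assumption. }
      apply (bigO_of_bounded _ _ 1 M). intros n Hn. split; [apply HM, Hn|lra].
Qed.
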